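(* Assume Assumptions A, B, C and D hold (with constants $L_\phi,G,V,H>0$), and let $w^{(t)}$, $0\le t\le T$, be generated by Algorithm 2, where $T=\beta/\varepsilon$ for a constant $\beta>0$ (assumed to be an integer). Let $\eta^{(t)}=D\sqrt{\varepsilon}$ for some $D>0$, and $\alpha_i^{(t)}=(1+\varepsilon)^t\alpha_i^{(0)}$ with $\alpha_i^{(0)}=\frac{\alpha}{e^{\beta}L_\phi}$ for some $\alpha\in(0,\tfrac14)$. Then $$\frac1T\sum_{t=0}^{T-1}[F(w^{(t)})-F_*]\le\frac{e^{\beta}L_\phi(1+\varepsilon)}{2(1-4\alpha)\alpha\beta}\cdot\frac1n\sum_{i=1}^n\|h(w^{(0)};i)-h_i^*\|^2\cdot\varepsilon+\frac{e^{\beta}L_\phi(4\varepsilon+3)}{2\alpha(1-4\alpha)}\Big[D^2H^2+c\big(2+(V+\varepsilon^2+2)GD^2\big)^2+2+V\Big]\cdot\varepsilon.$$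
   Context: Let $n,c,d$ be positive integers and $[n]=\{1,\dots,n\}$. For each $i\in[n]$ let $h(\cdot;i):\mathbb{R}^d\to\mathbb{R}^c$ (components $h_j(\cdot;i)$, $j\in[c]$) and $\phi_i:\mathbb{R}^c\to\mathbb{R}$. Put $f(w;i)=\phi_i(h(w;i))$, $F(w)=\frac1n\sum_{i=1}^n f(w;i)$ and $F_*=\inf_{w\in\mathbb{R}^d}F(w)$. Each $\phi_i$ is assumed to attain its minimum, and $h_i^*\in\arg\min_{z}\phi_i(z)$. Vector norms are Euclidean; matrix norms are operator (spectral) norms. Assumption A: each $\phi_i$ is convex, bounded below, and $L_\phi$-smooth, i.e. $\|\nabla\phi_i(z_1)-\nabla\phi_i(z_2)\|\le L_\phi\|z_1-z_2\|$ for all $z_1,z_2$. Assumption B: each $h(\cdot;i)$ is twice continuously differentiable and there is $G>0$ with $\|\nabla_w^2 h_j(w;i)\|\le G$ for all $w\in\mathbb{R}^d$, $i\in[n]$, $j\in[c]$. Iteration setup: given a tolerance $\varepsilon>0$, step sizes $\eta^{(t)}>0$, learning rates $\alpha_i^{(t)}>0$ and iterates $w^{(t)}$, let $H_i^{(t)}\in\mathbb{R}^{c\times d}$ be the Jacobian of $h(\cdot;i)$ at $w^{(t)}$, let $\Phi^{(t)}(v)=\frac{1}{2n}\sum_{i=1}^n\|\eta^{(t)}H_i^{(t)}v-\alpha_i^{(t)}\nabla\phi_i(h(w^{(t)};i))\|^2$, $\Psi^{(t)}(v)=\Phi^{(t)}(v)+\frac{\varepsilon^2}{2}\|v\|^2$,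 and let $v_{*\mathrm{reg}}^{(t)}$ be the unique minimizer of $\Psi^{(t)}$ over $\mathbb{R}^d$. Algorithm 2: choose $w^{(0)}\in\mathbb{R}^d$; for $t=0,\dots,T-1$ let $v^{(t)}$ be any vector with $\|v^{(t)}-v_{*\mathrm{reg}}^{(t)}\|\le\varepsilon$ and set $w^{(t+1)}=w^{(t)}-\eta^{(t)}v^{(t)}$. Assumption C (constant $V>0$): for each $0\le t<T$ there exists $\hat v^{(t)}\in\mathbb{R}^d$ with $\|\hat v^{(t)}\|^2\le V$ and $\Phi^{(t)}(\hat v^{(t)})\le\varepsilon^2$. Assumption D (constant $H>0$): $\|H_i^{(t)}\|\le H/\sqrt{\varepsilon}$ for all $i\in[n]$ and $0\le t<T$. *)

From HB Require Import structures.
From mathcomp Require Import all_boot all_order all_algebra.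
From mathcomp Require Import all_classical all_reals all_analysis.
Set Implicit Arguments. Unset Strict Implicit. Unset Printing Implicit Defensive.
Import Order.TTheory GRing.Theory Num.Theory.
Import numFieldNormedType.Exports.
Local Open Scope ring_scope.
Local Open Scope classical_set_scope.

Section Defs.
Variable R : realType.

Definition sqnorm m (v : 'cV[R]_m) : R := \sum_(i < m) (v i 0) ^+ 2.
Definition enorm m (v : 'cV[R]_m) : R := Num.sqrt (sqnorm v).

Definition opnorm m k (A : 'M[R]_(m, k)) : R :=
  sup [set enorm (A *m v) | v in [set v : 'cV[R]_k | enorm v <= 1]].

Definition basis_vec d (k : 'I_d) : 'cV[R]_d := delta_mx k 0.

Definition partial_deriv d (f : 'cV[R]_d -> R) (k : 'I_d) (x : 'cV[R]_d) : R :=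
  'D_(basis_vec k) f x.

Definition grad_vec d (f : 'cV[R]_d -> R) (x : 'cV[R]_d) : 'cV[R]_d :=
  \col_k partial_deriv f k x.
Definition hessian_mx d (f : 'cV[R]_d -> R) (x : 'cV[R]_d) : 'M[R]_d :=
  \matrix_(k, l) partial_deriv (partial_deriv f k) l x.
Definition jacobian_mx c d (h : 'cV[R]_d -> 'cV[R]_c) (x : 'cV[R]_d) : 'M[R]_(c, d) :=
  \matrix_(j, k) partial_deriv (fun y => h y j 0) k x.

Definition convex_fn m (f : 'cV[R]_m -> R) : Prop :=
  forall (x y : 'cV[R]_m) (s : R), 0 <= s -> s <= 1 ->
    f (s *: x + (1 - s) *: y) <= s * f x + (1 - s) * f y.

Definition bounded_below m (f : 'cV[R]_m -> R) : Prop :=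
  exists lb : R, forall x, lb <= f x.

Definition L_smooth m (L : R) (f : 'cV[R]_m -> R) : Prop :=
  (forall z, differentiable f z) /\
  (forall z1 z2, enorm (grad_vec f z1 - grad_vec f z2) <= L * enorm (z1 - z2)).

Definition twice_cont_diff d (f : 'cV[R]_d -> R) : Prop :=
  (forall x, differentiable f x) /\
  (forall k x, differentiable (partial_deriv f k) x) /\
  (forall k l, continuous (partial_deriv (partial_deriv f k) l)).

Definition Fobj n c d (h : 'I_n -> 'cV[R]_d -> 'cV[R]_c) (phi : 'I_n -> 'cV[R]_c -> R)
  (w : 'cV[R]_d) : R :=
  (n%:R)^-1 * \sum_(i < n) phi i (h i w).

Definition PhiT n c d (h : 'I_n -> 'cV[R]_d -> 'cV[R]_c) (phi : 'I_n -> 'cV[R]_c -> R)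
  (eta : R) (alpha : 'I_n -> R) (wt : 'cV[R]_d) (v : 'cV[R]_d) : R :=
  (2 * n%:R)^-1 * \sum_(i < n)
     sqnorm (eta *: (jacobian_mx (h i) wt *m v) - alpha i *: grad_vec (phi i) (h i wt)).

Definition PsiT n c d (h : 'I_n -> 'cV[R]_d -> 'cV[R]_c) (phi : 'I_n -> 'cV[R]_c -> R)
  (eps eta : R) (alpha : 'I_n -> R) (wt : 'cV[R]_d) (v : 'cV[R]_d) : R :=
  PhiT h phi eta alpha wt v + eps ^+ 2 / 2 * sqnorm v.

End Defs.

(* Each phi_i is convex and L_phi-smooth, so a gradient step of length a <= alpha / L_phi from
   h(w_t;i) moves it towards h_i^*, decreasing the squared distance by
   2 a (1 - alpha) (phi_i(h(w_t;i)) - phi_i(h_i^* )).  The point h(w_{t+1};i) reached by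
   Algorithm 2 differs from that gradient step by three errors, each of squared size O(eps^2):
   the Taylor remainder of h (Hessian bound G), the residual of the regularized least-squares
   problem (small by Assumption C and the minimality of v_reg), and the inexactness v - v_reg
   (amplified by the Jacobian, Assumption D).  Young's inequality with parameter eps merges the
   two at the price of a factor 1 + eps.  As the learning rates grow by exactly this factor,
   the potential sum_i |h(w_t;i) - h_i^*|^2 / (1 + eps)^t telescopes, and the rates stay below
   alpha / L_phi because (1 + eps)^T <= e^beta. *)

From HB Require Import structures.
From mathcomp Require Import all_boot all_order all_algebra.
From mathcomp Require Import all_classical all_reals all_analysis.
From mathcomp Require Import ring lra.
Import Order.TTheory GRing.Theory Num.Theory.
Import numFieldNormedType.Exports.
Set Implicit Arguments. Unset Strict Implicit. Unset Printing Implicit Defensive.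
Local Open Scope ring_scope.
Local Open Scope classical_set_scope.

Section RealFunctions.
Variable R : realType.
Implicit Types (k dk ddk : R -> R) (a b s C M : R).

Lemma increment_le_of_derive_le k dk a b M : a < b ->
  (forall s, is_derive s (1 : R) k (dk s)) ->
  (forall s, a < s -> s < b -> dk s <= M) -> k b - k a <= M * (b - a).
Proof.
move=> ab dk_k dkM.
have [x xab ->] : exists2 x, x \in `]a, b[%R & k b - k a = dk x * (b - a).
  apply: MVT => //; apply: continuous_subspaceT => x.
  by apply/differentiable_continuous/derivable1_diffP; exact: ex_derive.
apply: ler_wpM2r; first by rewrite subr_ge0 ltW.
by move: xab; rewrite in_itv /= => /andP[]; exact: dkM.
Qed.

Lemma le_of_le_addr_small a b C : 0 <= C ->
  (forall s, 0 < s -> s <= 1 -> a <= b + s * C) -> a <= b.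
Proof.
move=> C0 small; apply/ler_addgt0Pr => e e0.
pose s := Num.min 1 (e / (C + 1)).
have s0 : 0 < s by rewrite lt_min ltr01 divr_gt0 // ltr_wpDl.
have s1 : s <= 1 by rewrite ge_min lexx.
apply: (le_trans (small s s0 s1)); rewrite lerD2l.
have : s <= e / (C + 1) by rewrite ge_min lexx orbT.
rewrite ler_pdivlMr ?ltr_wpDl // => se; nra.
Qed.

Lemma taylor_ub_of_derive_le_affine k dk M :
  (forall s, is_derive s (1 : R) k (dk s)) ->
  (forall s, 0 < s -> s < 1 -> dk s <= dk 0 + M * s) ->
  k 1 <= k 0 + dk 0 + M / 2.
Proof.
move=> dk_k dkM.
pose q x := - dk 0 * x - M / 2 * x ^+ 2.
have dq s : is_derive s (1 : R) q (- dk 0 - M * s).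
  have -> : q = - dk 0 \*: (@id R) - (M / 2) \*: (@id R) ^+ 2 by apply/funext.
  by apply: is_derive_eq; rewrite /GRing.scale /=; field.
have slope s : 0 < s -> s < 1 -> dk s + (- dk 0 - M * s) <= 0.
  by move=> s0 s1; have := dkM s s0 s1; lra.
have := increment_le_of_derive_le ltr01 (fun s => is_deriveD (dk_k s) (dq s)) slope.
change (k 1 + q 1 - (k 0 + q 0) <= 0 * (1 - 0) -> k 1 <= k 0 + dk 0 + M / 2).
by rewrite /q expr1n expr0n /= !mulr0 !mulr1; lra.
Qed.

Lemma taylor_ub_of_derive2_le k dk ddk M :
  (forall s, is_derive s (1 : R) k (dk s)) ->
  (forall s, is_derive s (1 : R) dk (ddk s)) ->
  (forall s, 0 < s -> s < 1 -> ddk s <= M) ->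
  k 1 <= k 0 + dk 0 + M / 2.
Proof.
move=> dk_k ddk_dk ddkM; apply: taylor_ub_of_derive_le_affine => // s s0 s1.
have := increment_le_of_derive_le s0 ddk_dk (fun t t0 ts => ddkM t t0 (lt_trans ts s1)).
by rewrite subr0; lra.
Qed.

Lemma taylor_abs_of_derive2_abs k dk ddk M :
  (forall s, is_derive s (1 : R) k (dk s)) ->
  (forall s, is_derive s (1 : R) dk (ddk s)) ->
  (forall s, 0 < s -> s < 1 -> `|ddk s| <= M) ->
  `|k 1 - k 0 - dk 0| <= M / 2.
Proof.
move=> dk_k ddk_dk ddkM.
have [ddk_le Nddk_le] : (forall s, 0 < s -> s < 1 -> ddk s <= M) /\
                       (forall s, 0 < s -> s < 1 -> - ddk s <= M).
  by split=> s s0 s1; have := ddkM s s0 s1; rewrite ler_norml => /andP[]; lra.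
have := taylor_ub_of_derive2_le dk_k ddk_dk ddk_le.
have := @taylor_ub_of_derive2_le (fun s => - k s) (fun s => - dk s) (fun s => - ddk s) M
  (fun s => is_deriveN (dk_k s)) (fun s => is_deriveN (ddk_dk s)) Nddk_le.
by rewrite ler_norml => ? ?; apply/andP; split; lra.
Qed.

Lemma sqrD_young a b e : 0 < e ->
  (a + b) ^+ 2 <= (1 + e) * a ^+ 2 + (1 + e^-1) * b ^+ 2.
Proof.
move=> e0; rewrite -subr_ge0.
have -> : (1 + e) * a ^+ 2 + (1 + e^-1) * b ^+ 2 - (a + b) ^+ 2 = e^-1 * (e * a - b) ^+ 2.
  by field; rewrite gt_eqF.
by rewrite mulr_ge0 ?invr_ge0 ?sqr_ge0 // ltW.
Qed.

Lemma sqrBB_le a b C : (a - b - C) ^+ 2 <= 3 * (a ^+ 2 + b ^+ 2 + C ^+ 2).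
Proof.
rewrite -subr_ge0.
have -> : 3 * (a ^+ 2 + b ^+ 2 + C ^+ 2) - (a - b - C) ^+ 2 =
  (a + b) ^+ 2 + (a + C) ^+ 2 + (b - C) ^+ 2 by ring.
by rewrite !addr_ge0 ?sqr_ge0.
Qed.

End RealFunctions.

Section Vectors.
Variables (R : realType) (m : nat).
Implicit Types (u v w : 'cV[R]_m) (a b e : R).

Definition dot u v : R := \sum_(i < m) u i 0 * v i 0.

Lemma dotC u v : dot u v = dot v u.
Proof. by apply: eq_bigr => i _; rewrite mulrC. Qed.

Lemma dot0l v : dot 0 v = 0.
Proof. by rewrite /dot big1 // => i _; rewrite mxE mul0r. Qed.

Lemma dotZl a u v : dot (a *: u) v = a * dot u v.
Proof. by rewrite /dot mulr_sumr; apply: eq_bigr => i _; rewrite mxE mulrA. Qed.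

Lemma dotNl u v : dot (- u) v = - dot u v.
Proof. by rewrite -scaleN1r dotZl mulN1r. Qed.

Lemma dotBr u v w : dot u (v - w) = dot u v - dot u w.
Proof. by rewrite /dot -sumrB; apply: eq_bigr => i _; rewrite !mxE mulrBr. Qed.

Lemma dotvv u : dot u u = sqnorm u.
Proof. by apply: eq_bigr => i _; rewrite expr2. Qed.

Lemma sqnorm_ge0 u : 0 <= sqnorm u.
Proof. by apply: sumr_ge0 => i _; exact: sqr_ge0. Qed.

Lemma enorm_ge0 u : 0 <= enorm u.
Proof. exact: sqrtr_ge0. Qed.

Lemma enorm_sqr u : enorm u ^+ 2 = sqnorm u.
Proof. by rewrite sqr_sqrtr // sqnorm_ge0. Qed.

Lemma sqnormZ a u : sqnorm (a *: u) = a ^+ 2 * sqnorm u.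
Proof. by rewrite /sqnorm mulr_sumr; apply: eq_bigr => i _; rewrite mxE exprMn. Qed.

Lemma sqnormN u : sqnorm (- u) = sqnorm u.
Proof. by rewrite -scaleN1r sqnormZ sqrrN expr1n mul1r. Qed.

Lemma enormN u : enorm (- u) = enorm u.
Proof. by rewrite /enorm sqnormN. Qed.

Lemma enormZ a u : enorm (a *: u) = `|a| * enorm u.
Proof. by rewrite /enorm sqnormZ sqrtrM ?sqr_ge0 // sqrtr_sqr. Qed.

Lemma enorm0 : enorm (0 : 'cV[R]_m) = 0.
Proof. by rewrite -(scale0r 0) enormZ normr0 mul0r. Qed.

Lemma enorm_eq0 u : enorm u = 0 -> u = 0.
Proof.
move/eqP; rewrite sqrtr_eq0 => u_le0.
have /psumr_eq0P u0 : sqnorm u = 0 by apply/eqP; rewrite eq_le u_le0 sqnorm_ge0.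
apply/matrixP => i j; rewrite ord1 mxE.
by apply/eqP; rewrite -sqrf_eq0 u0 // => k _; exact: sqr_ge0.
Qed.

Lemma sqnorm_le_sqr u e : enorm u <= e -> sqnorm u <= e ^+ 2.
Proof. by move=> ue; rewrite -enorm_sqr; have := enorm_ge0 u; nra. Qed.

Lemma sqnormZBZ a b u v :
  sqnorm (a *: u - b *: v) = a ^+ 2 * sqnorm u - 2 * a * b * dot u v + b ^+ 2 * sqnorm v.
Proof.
rewrite /sqnorm /dot !mulr_sumr -sumrB -big_split /=.
by apply: eq_bigr => i _; rewrite !mxE; ring.
Qed.

Lemma dot_le u v : dot u v <= enorm u * enorm v.
Proof.
have [u0|u0] := eqVneq (enorm u) 0; first by rewrite u0 mul0r (enorm_eq0 u0) dot0l.
have [v0|v0] := eqVneq (enorm v) 0.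
  by rewrite v0 mulr0 (enorm_eq0 v0) dotC dot0l.
have uv0 : 0 < enorm u * enorm v by rewrite mulr_gt0 // lt_def ?u0 ?v0 enorm_ge0.
(* expand [0 <= | |v| u - |u| v |^2] *)
have := sqnorm_ge0 (enorm v *: u - enorm u *: v).
rewrite sqnormZBZ -!enorm_sqr => expand.
by rewrite -(ler_pM2l uv0); nra.
Qed.

Lemma normr_dot_le u v : `|dot u v| <= enorm u * enorm v.
Proof.
have := dot_le (- u) v; rewrite dotNl enormN => Nle.
by rewrite ler_norml dot_le andbT lerNl.
Qed.

Lemma sqnormD_young u v e : 0 < e ->
  sqnorm (u + v) <= (1 + e) * sqnorm u + (1 + e^-1) * sqnorm v.
Proof.
move=> e0; rewrite /sqnorm !mulr_sumr -big_split /=; apply: ler_sum => i _.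
by rewrite mxE; exact: sqrD_young.
Qed.

Lemma sqnormD_le u v : sqnorm (u + v) <= 2 * sqnorm u + 2 * sqnorm v.
Proof. by have := sqnormD_young u v ltr01; rewrite invr1. Qed.

Lemma sqnormBB_le u v w : sqnorm (u - v - w) <= 3 * (sqnorm u + sqnorm v + sqnorm w).
Proof.
rewrite /sqnorm -!big_split /= mulr_sumr; apply: ler_sum => i _.
by rewrite !mxE; exact: sqrBB_le.
Qed.

Lemma normr_coord_le u j : `|u j 0| <= enorm u.
Proof.
rewrite -sqrtr_sqr ler_sqrt ?sqnorm_ge0 // /sqnorm (bigD1 j) //=.
by rewrite lerDl sumr_ge0 // => i _; exact: sqr_ge0.
Qed.

Lemma sqnorm_le_coord u b : (forall j, `|u j 0| <= b) -> sqnorm u <= m%:R * b ^+ 2.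
Proof.
move=> ub; have -> : m%:R * b ^+ 2 = \sum_(j < m) b ^+ 2.
  by rewrite sumr_const card_ord mulr_natl.
apply: ler_sum => j _.
by rewrite -real_normK ?num_real // lerXn2r ?nnegrE // (le_trans _ (ub j)).
Qed.

End Vectors.

Lemma normr_mulmx_coord_le (R : realType) m k (A : 'M[R]_(m, k)) v i :
  `|(A *m v) i 0| <= (\sum_(j < k) `|A i j|) * enorm v.
Proof.
rewrite mxE mulr_suml; apply: le_trans (ler_norm_sum _ _ _) _.
by apply: ler_sum => j _; rewrite normrM ler_wpM2l // normr_coord_le.
Qed.

Lemma opnorm_has_sup (R : realType) m k (A : 'M[R]_(m, k)) :
  has_sup [set enorm (A *m v) | v in [set v : 'cV[R]_k | enorm v <= 1]].
Proof.
pose S := \sum_(i < m) \sum_(j < k) `|A i j|.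
have S0 : 0 <= S by apply: sumr_ge0 => *; apply: sumr_ge0.
split; first by exists (enorm (A *m 0)), 0 => //=; rewrite enorm0.
exists (Num.sqrt (m%:R * S ^+ 2)) => _ [x /= x1 <-]; rewrite ler_sqrt ?mulr_ge0 ?sqr_ge0 //.
apply: sqnorm_le_coord => i; apply: le_trans (normr_mulmx_coord_le A x i) _.
apply: (@le_trans _ _ (\sum_(j < k) `|A i j|)); first by rewrite ler_piMr ?sumr_ge0.
by rewrite /S (bigD1 i) //= lerDl; apply: sumr_ge0 => *; apply: sumr_ge0.
Qed.

Lemma opnorm_ge0 (R : realType) m k (A : 'M[R]_(m, k)) : 0 <= opnorm A.
Proof.
rewrite -(enorm0 R m) -(mulmx0 _ A); apply: (sup_upper_bound (opnorm_has_sup A)).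
by exists 0 => //=; rewrite enorm0.
Qed.

Lemma enorm_mulmx_le (R : realType) m k (A : 'M[R]_(m, k)) v :
  enorm (A *m v) <= opnorm A * enorm v.
Proof.
have [v0|v0] := eqVneq (enorm v) 0.
  by rewrite v0 mulr0 (enorm_eq0 v0) mulmx0 enorm0.
have vpos : 0 < enorm v by rewrite lt_def v0 enorm_ge0.
have : enorm (A *m ((enorm v)^-1 *: v)) <= opnorm A.
  apply: (sup_upper_bound (opnorm_has_sup A)); exists ((enorm v)^-1 *: v) => //=.
  by rewrite enormZ ger0_norm ?invr_ge0 ?enorm_ge0 // mulVf.
by rewrite -scalemxAr enormZ ger0_norm ?invr_ge0 ?enorm_ge0 // -ler_pdivrMr // mulrC.
Qed.

Section Gradients.
Variables (R : realType) (m : nat).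
Implicit Types (f : 'cV[R]_m -> R) (x y u : 'cV[R]_m).

Lemma derive_sum_partial f y u : differentiable f y ->
  'D_u f y = \sum_(k < m) u k 0 * partial_deriv f k y.
Proof.
move=> df; rewrite deriveE // {1}(matrix_sum_delta u) linear_sum.
by apply: eq_bigr => k _; rewrite big_ord1 linearZ /partial_deriv deriveE.
Qed.

Lemma derive_dot_grad f y u : differentiable f y -> 'D_u f y = dot u (grad_vec f y).
Proof. by move=> df; rewrite derive_sum_partial //; apply: eq_bigr => k _; rewrite mxE. Qed.

Lemma is_derive_line f x u s : differentiable f (x + s *: u) ->
  is_derive s (1 : R) (fun r : R => f (x + r *: u)) ('D_u f (x + s *: u)).
Proof.
move=> df.
have shiftE : (fun h : R => h^-1 *: ((fun r => f (x + r *: u)) (h *: 1 + s) - f (x + s *: u)))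
  = (fun h : R => h^-1 *: (f (h *: u + (x + s *: u)) - f (x + s *: u))).
  by apply/funext => h; rewrite scalerDl [_ *: 1]mulr1 addrCA addrC.
apply: DeriveDef; first by rewrite /derivable shiftE; exact: diff_derivable.
by rewrite /derive shiftE.
Qed.

Lemma jacobian_mulmx_coord c (h : 'cV[R]_m -> 'cV[R]_c) x u j :
  (jacobian_mx h x *m u) j 0 = dot u (grad_vec (fun y => h y j 0) x).
Proof. by rewrite mxE; apply: eq_bigr => l _; rewrite !mxE mulrC. Qed.

Lemma hessian_quad_form f x u :
  \sum_(l < m) u l 0 * dot u (grad_vec (partial_deriv f l) x) = dot u (hessian_mx f x *m u).
Proof.
apply: eq_bigr => l _; rewrite mxE; congr (_ * _).
by apply: eq_bigr => j _; rewrite !mxE mulrC.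
Qed.

Lemma taylor_remainder_le f (G : R) x u : twice_cont_diff f ->
  (forall y, opnorm (hessian_mx f y) <= G) ->
  `|f (x + u) - f x - dot u (grad_vec f x)| <= G / 2 * sqnorm u.
Proof.
move=> [df [dpf _]] hess_le.
pose dk s := \sum_(l < m) u l 0 * partial_deriv f l (x + s *: u).
pose ddk s := \sum_(l < m) u l 0 * dot u (grad_vec (partial_deriv f l) (x + s *: u)).
have dk_k s : is_derive s (1 : R) (fun s => f (x + s *: u)) (dk s).
  by apply: is_derive_eq; [exact: is_derive_line | rewrite derive_sum_partial].
have ddk_dk s : is_derive s (1 : R) dk (ddk s).
  have -> : dk = \sum_(l < m) (fun s => u l 0 * partial_deriv f l (x + s *: u)).
    by apply/funext => r; rewrite fct_sumE.
  apply: is_derive_sum => l.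
  have -> : (fun s => u l 0 * partial_deriv f l (x + s *: u)) =
            u l 0 \*: (fun s => partial_deriv f l (x + s *: u)) by apply/funext.
  apply: is_derive_eq; first exact/is_deriveZ/is_derive_line.
  by rewrite derive_dot_grad.
have ddk_le s : 0 < s -> s < 1 -> `|ddk s| <= G * sqnorm u.
  move=> _ _; rewrite /ddk hessian_quad_form; apply: le_trans (normr_dot_le _ _) _.
  have := enorm_mulmx_le (hessian_mx f (x + s *: u)) u; have := hess_le (x + s *: u).
  have := enorm_ge0 u; have := enorm_ge0 (hessian_mx f (x + s *: u) *m u).
  rewrite -enorm_sqr; nra.
have := taylor_abs_of_derive2_abs dk_k ddk_dk ddk_le.
rewrite /dk scale1r scale0r addr0 mulrAC.
by congr (`|_ - _ - _| <= _); apply: eq_bigr => l _; rewrite mxE.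
Qed.

End Gradients.

Section SmoothConvex.
Variables (R : realType) (m : nat) (L : R) (f : 'cV[R]_m -> R).
Hypotheses (f_smooth : L_smooth L f) (L_gt0 : 0 < L).
Let L_ge0 : 0 <= L := ltW L_gt0.
Implicit Types (x y z u : 'cV[R]_m).

Lemma is_derive_line_dot x u s :
  is_derive s (1 : R) (fun r : R => f (x + r *: u)) (dot u (grad_vec f (x + s *: u))).
Proof.
have df := f_smooth.1 (x + s *: u).
by rewrite -derive_dot_grad //; exact: is_derive_line.
Qed.

Lemma dot_grad_line_lipschitz x u s : 0 <= s ->
  `|dot u (grad_vec f (x + s *: u)) - dot u (grad_vec f x)| <= L * s * sqnorm u.
Proof.
move=> s0; rewrite -dotBr; apply: le_trans (normr_dot_le _ _) _.
have := f_smooth.2 (x + s *: u) x.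
rewrite [x + _]addrC addrK enormZ ger0_norm // => lip.
by rewrite -enorm_sqr; have := enorm_ge0 u; nra.
Qed.

Lemma descent_le x u : f (x + u) <= f x + dot u (grad_vec f x) + L / 2 * sqnorm u.
Proof.
have := taylor_ub_of_derive_le_affine (is_derive_line_dot x u) (M := L * sqnorm u).
rewrite scale1r scale0r !addr0 mulrAC; apply => s s0 _.
have /ler_normlP[_] := dot_grad_line_lipschitz x u (ltW s0).
by rewrite -lerBlDl mulrAC.
Qed.

Lemma convex_dot_grad_le x u : convex_fn f -> dot u (grad_vec f x) <= f (x + u) - f x.
Proof.
move=> f_cvx; apply: (@le_of_le_addr_small _ _ _ (L * sqnorm u)).
  by rewrite mulr_ge0 // sqnorm_ge0.
move=> s s0 s1.
(* on [(0, s)] the slope of [f] along [u] is at least its slope at [x] minus [s L |u|^2] *)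
have slope t : 0 < t -> t < s ->
    - dot u (grad_vec f (x + t *: u)) <= - dot u (grad_vec f x) + s * (L * sqnorm u).
  move=> t0 ts; have /ler_normlP[lip _] := dot_grad_line_lipschitz x u (ltW t0).
  have : 0 <= L * sqnorm u by rewrite mulr_ge0 // sqnorm_ge0.
  nra.
have := increment_le_of_derive_le s0 (fun t => is_deriveN (is_derive_line_dot x u t)) slope.
change (- f (x + s *: u) - - f (x + 0 *: u)
          <= (- dot u (grad_vec f x) + s * (L * sqnorm u)) * (s - 0) ->
        dot u (grad_vec f x) <= f (x + u) - f x + s * (L * sqnorm u)).
rewrite scale0r addr0 subr0 => segment.
have := f_cvx (x + u) x s (ltW s0) s1.
rewrite scalerDr scalerBl scale1r addrC addrA subrK => cvx.
have : s * dot u (grad_vec f x) <= s * (f (x + u) - f x + s * (L * sqnorm u)) by nra.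
by rewrite ler_pM2l.
Qed.

Lemma sqnorm_grad_le x z : (forall y, f z <= f y) ->
  sqnorm (grad_vec f x) <= 2 * L * (f x - f z).
Proof.
move=> z_min.
(* compare [f z] with the value after the gradient step of length [1 / L] *)
have := descent_le x (- L^-1 *: grad_vec f x).
rewrite dotZl dotvv sqnormZ sqrrN => step.
have := z_min (x + - L^-1 *: grad_vec f x).
have := sqnorm_ge0 (grad_vec f x).
move: step; set g := sqnorm _ => step g0 zy.
rewrite (_ : L / 2 * (L^-1 ^+ 2 * g) = L^-1 / 2 * g) in step; last by field; rewrite gt_eqF.
rewrite -subr_ge0.
have -> : 2 * L * (f x - f z) - g = 2 * L * ((f x - f z) - L^-1 / 2 * g).
  by field; rewrite gt_eqF.
apply: mulr_ge0; first by rewrite mulr_ge0.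
by rewrite subr_ge0; lra.
Qed.

Lemma sqnorm_grad_step_le x z (a al : R) :
  convex_fn f -> (forall y, f z <= f y) -> 0 < a -> a * L <= al ->
  sqnorm (x - z - a *: grad_vec f x) <= sqnorm (x - z) - 2 * a * (1 - al) * (f x - f z).
Proof.
move=> f_cvx z_min a0 aL.
have := convex_dot_grad_le x (z - x) f_cvx; rewrite subrKC -opprB dotNl => cvx.
have gap0 : 0 <= f x - f z by rewrite subr_ge0.
have gb := ler_wpM2l (sqr_ge0 a) (sqnorm_grad_le x z_min).
have aLgap : a * (a * L * (f x - f z)) <= a * (al * (f x - f z)).
  by rewrite ler_pM2l // ler_wpM2r.
have cvx_a : a * (f x - f z) <= a * dot (x - z) (grad_vec f x) by rewrite ler_pM2l //; lra.
rewrite -{1}[x - z]scale1r sqnormZBZ expr1n; nra.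
Qed.

End SmoothConvex.

Lemma sqnorm_linearization_le (R : realType) c d (h : 'cV[R]_d -> 'cV[R]_c) (G : R) x u :
  (forall j, twice_cont_diff (fun y => h y j 0)) ->
  (forall j y, opnorm (hessian_mx (fun z => h z j 0) y) <= G) ->
  sqnorm (h (x + u) - h x - jacobian_mx h x *m u) <= c%:R * (G / 2 * sqnorm u) ^+ 2.
Proof.
move=> h_C2 h_hess; apply: sqnorm_le_coord => j.
have := taylor_remainder_le x u (h_C2 j) (h_hess j).
by rewrite -jacobian_mulmx_coord !mxE; apply.
Qed.

Lemma sqnorm_update_error_le (R : realType) c d (h : 'cV[R]_d -> 'cV[R]_c) (g : 'cV[R]_c)
    (G eta a : R) x v vreg :
  (forall j, twice_cont_diff (fun y => h y j 0)) ->
  (forall j y, opnorm (hessian_mx (fun z => h z j 0) y) <= G) -> 0 <= eta ->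
  sqnorm (h (x - eta *: v) - (h x - a *: g)) <=
  3 * (c%:R * (G / 2 * (eta ^+ 2 * sqnorm v)) ^+ 2
       + sqnorm (eta *: (jacobian_mx h x *m vreg) - a *: g)
       + (eta * opnorm (jacobian_mx h x) * enorm (v - vreg)) ^+ 2).
Proof.
move=> h_C2 h_hess eta0; set J := jacobian_mx h x.
(* Taylor error of the step, minus the least-squares residual, minus the inexactness error *)
have -> : h (x - eta *: v) - (h x - a *: g) =
    (h (x + - (eta *: v)) - h x - J *m - (eta *: v)) - (eta *: (J *m vreg) - a *: g)
    - eta *: (J *m (v - vreg)).
  rewrite mulmxN -scalemxAr mulmxBr; set y := J *m v; set z := J *m vreg.
  by apply/matrixP => i j; rewrite !mxE; ring.
apply: le_trans (sqnormBB_le _ _ _) _; rewrite ler_wpM2l //.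
apply: lerD; first apply: lerD => //.
- by have := sqnorm_linearization_le x (- (eta *: v)) h_C2 h_hess; rewrite sqnormN sqnormZ.
- apply: sqnorm_le_sqr; rewrite enormZ ger0_norm // -mulrA ler_wpM2l //.
  exact: enorm_mulmx_le.
Qed.

Lemma sqnorm_update_error_bound (R : realType) c d (h : 'cV[R]_d -> 'cV[R]_c)
    (g : 'cV[R]_c) (G Hc eps Dc a W : R) x v vreg :
  (forall j, twice_cont_diff (fun y => h y j 0)) ->
  (forall j y, opnorm (hessian_mx (fun z => h z j 0) y) <= G) ->
  0 <= G -> 0 < eps -> 0 < Dc -> sqnorm v <= 2 * W -> enorm (v - vreg) <= eps ->
  opnorm (jacobian_mx h x) <= Hc / Num.sqrt eps ->
  sqnorm (h (x - (Dc * Num.sqrt eps) *: v) - (h x - a *: g)) <=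
  3 * (c%:R * (G * Dc ^+ 2 * eps * W) ^+ 2
       + sqnorm ((Dc * Num.sqrt eps) *: (jacobian_mx h x *m vreg) - a *: g)
       + (Dc * Hc * eps) ^+ 2).
Proof.
move=> h_C2 h_hess G0 e0 D0 v_le v_vreg h_jac.
set eta := Dc * Num.sqrt eps; set J := jacobian_mx h x.
have se0 : 0 < Num.sqrt eps by rewrite sqrtr_gt0.
have eta0 : 0 < eta by rewrite mulr_gt0.
apply: le_trans (sqnorm_update_error_le g a x v vreg h_C2 h_hess (ltW eta0)) _.
have tay0 : 0 <= G / 2 * (eta ^+ 2 * sqnorm v).
  by rewrite mulr_ge0 ?divr_ge0 // mulr_ge0 ?sqr_ge0 ?sqnorm_ge0.
have tay_le : G / 2 * (eta ^+ 2 * sqnorm v) <= G * Dc ^+ 2 * eps * W.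
  have -> : eta ^+ 2 = Dc ^+ 2 * eps by rewrite exprMn sqr_sqrtr // ltW.
  have -> : G * Dc ^+ 2 * eps * W = G / 2 * (Dc ^+ 2 * eps * (2 * W)) by field.
  apply: ler_wpM2l; first by rewrite divr_ge0.
  by apply: ler_wpM2l; rewrite // mulr_ge0 ?sqr_ge0 // ltW.
have jac0 : 0 <= eta * opnorm J * enorm (v - vreg).
  by rewrite !mulr_ge0 ?opnorm_ge0 ?enorm_ge0 ?ltW.
have jac_le : eta * opnorm J * enorm (v - vreg) <= Dc * Hc * eps.
  apply: ler_pM; [by rewrite mulr_ge0 ?opnorm_ge0 // ltW | exact: enorm_ge0 | | exact: v_vreg].
  apply: le_trans (ler_wpM2l (ltW eta0) h_jac) _.
  by rewrite le_eqVlt; apply/predU1l; rewrite /eta; field; rewrite gt_eqF.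
apply: ler_wpM2l => //; apply: lerD; first apply: lerD => //.
- by apply: ler_wpM2l => //; rewrite ler_sqr ?nnegrE // (le_trans tay0 tay_le).
- by rewrite ler_sqr ?nnegrE // (le_trans jac0 jac_le).
Qed.

Lemma sum_error_terms_le (R : realType) n c (r : 'I_n -> R) (G Dc Hc eps V W : R) :
  0 <= G -> 0 < eps -> 0 <= W -> \sum_(i < n) r i <= n%:R * (eps ^+ 2 * (2 + V)) ->
  \sum_(i < n) (c%:R * (G * Dc ^+ 2 * eps * W) ^+ 2 + r i + (Dc * Hc * eps) ^+ 2) <=
    n%:R * eps ^+ 2 * (Dc ^+ 2 * Hc ^+ 2 + c%:R * (2 + W * G * Dc ^+ 2) ^+ 2 + 2 + V).
Proof.
move=> G0 e0 W0 r_le; rewrite !big_split /= !sumr_const card_ord.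
have -> : n%:R * eps ^+ 2 * (Dc ^+ 2 * Hc ^+ 2 + c%:R * (2 + W * G * Dc ^+ 2) ^+ 2 + 2 + V) =
    (c%:R * (eps ^+ 2 * (2 + W * G * Dc ^+ 2) ^+ 2)) *+ n + n%:R * (eps ^+ 2 * (2 + V))
    + (Dc * Hc * eps) ^+ 2 *+ n by ring.
rewrite lerD2r lerD // ler_wMn2r // ler_wpM2l //.
rewrite -exprMn ler_sqr ?nnegrE; last 2 first.
- exact: mulr_ge0 (mulr_ge0 (mulr_ge0 G0 (sqr_ge0 Dc)) (ltW e0)) W0.
- exact: mulr_ge0 (ltW e0) (addr_ge0 (ler0n _ 2) (mulr_ge0 (mulr_ge0 W0 G0) (sqr_ge0 Dc))).
have -> : G * Dc ^+ 2 * eps * W = eps * (W * G * Dc ^+ 2) by ring.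
by rewrite ler_pM2l // lerDr.
Qed.

Section OneIteration.
Variables (R : realType) (n c d : nat).
Variables (h : 'I_n -> 'cV[R]_d -> 'cV[R]_c) (phi : 'I_n -> 'cV[R]_c -> R).
Implicit Types (eps eta a : R) (alpha : 'I_n -> R) (x v vreg : 'cV[R]_d).

Lemma PhiT_ge0 eta alpha x v : 0 <= PhiT h phi eta alpha x v.
Proof.
by rewrite mulr_ge0 ?invr_ge0 ?mulr_ge0 ?ler0n //; apply: sumr_ge0 => *; exact: sqnorm_ge0.
Qed.

Lemma PsiT_argmin_bounds eps eta alpha x vreg vh (V : R) : (0 < n)%N -> 0 < eps ->
  (forall u, PsiT h phi eps eta alpha x vreg <= PsiT h phi eps eta alpha x u) ->
  sqnorm vh <= V -> PhiT h phi eta alpha x vh <= eps ^+ 2 ->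
  sqnorm vreg <= 2 + V /\
  \sum_(i < n) sqnorm (eta *: (jacobian_mx (h i) x *m vreg)
                       - alpha i *: grad_vec (phi i) (h i x)) <= n%:R * (eps ^+ 2 * (2 + V)).
Proof.
move=> n0 e0 vreg_min vhV vh_res.
have e2 : 0 < eps ^+ 2 / 2 by rewrite divr_gt0 ?exprn_gt0.
have := vreg_min vh; rewrite /PsiT => Psi_le.
have := PhiT_ge0 eta alpha x vreg; have := ler_wpM2l (ltW e2) vhV.
have := mulr_ge0 (ltW e2) (sqnorm_ge0 vreg).
split; first by rewrite -(ler_pM2l e2); lra.
have n2 : 0 < 2 * n%:R :> R by rewrite mulr_gt0 ?ltr0n.
rewrite -[X in X <= _](mulVKf (negbT (gt_eqF n2))) -/(PhiT _ _ _ _ _ _).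
have -> : n%:R * (eps ^+ 2 * (2 + V)) = 2 * n%:R * (eps ^+ 2 / 2 * (2 + V)) by field.
rewrite ler_pM2l //; lra.
Qed.

Lemma sum_sqdist_step_le (hstar : 'I_n -> 'cV[R]_c) (L G V Hc eps Dc a al : R)
    x x1 v vreg vh :
  (0 < n)%N -> 0 < L -> 0 <= G -> 0 <= V -> 0 < eps -> 0 < Dc -> 0 < a -> a * L <= al ->
  (forall i z, phi i (hstar i) <= phi i z) ->
  (forall i, convex_fn (phi i)) -> (forall i, L_smooth L (phi i)) ->
  (forall i j, twice_cont_diff (fun y => h i y j 0)) ->
  (forall i j y, opnorm (hessian_mx (fun z => h i z j 0) y) <= G) ->
  (forall u, PsiT h phi eps (Dc * Num.sqrt eps) (fun _ => a) x vreg
          <= PsiT h phi eps (Dc * Num.sqrt eps) (fun _ => a) x u) ->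
  enorm (v - vreg) <= eps -> x1 = x - (Dc * Num.sqrt eps) *: v ->
  sqnorm vh <= V -> PhiT h phi (Dc * Num.sqrt eps) (fun _ => a) x vh <= eps ^+ 2 ->
  (forall i, opnorm (jacobian_mx (h i) x) <= Hc / Num.sqrt eps) ->
  \sum_(i < n) sqnorm (h i x1 - hstar i) <=
    (1 + eps) * (\sum_(i < n) sqnorm (h i x - hstar i)
                 - 2 * a * (1 - al) * \sum_(i < n) (phi i (h i x) - phi i (hstar i)))
    + (1 + eps^-1) * (3 * (n%:R * eps ^+ 2 *
        (Dc ^+ 2 * Hc ^+ 2 + c%:R * (2 + (V + eps ^+ 2 + 2) * G * Dc ^+ 2) ^+ 2 + 2 + V))).
Proof.
move=> n0 L0 G0 V0 e0 D0 a0 aL hstar_min phi_cvx phi_smooth h_C2 h_hess vreg_min v_vreg x1E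
  vhV vh_res h_jac.
set W := V + eps ^+ 2 + 2.
pose g i := grad_vec (phi i) (h i x).
have [vreg_le res_le] := PsiT_argmin_bounds n0 e0 vreg_min vhV vh_res.
have v_le : sqnorm v <= 2 * W.
  rewrite -(subrKC vreg v); apply: le_trans (sqnormD_le _ _) _.
  by have := sqnorm_le_sqr v_vreg; rewrite /W; lra.
(* Young's inequality splits the distance into a gradient step on [phi i] and its error *)
have dist_le i : sqnorm (h i x1 - hstar i) <=
    (1 + eps) * (sqnorm (h i x - hstar i) - 2 * a * (1 - al) * (phi i (h i x) - phi i (hstar i)))
    + (1 + eps^-1) * sqnorm (h i x1 - (h i x - a *: g i)).
  have -> : h i x1 - hstar i = (h i x - hstar i - a *: g i) + (h i x1 - (h i x - a *: g i)).
    by apply/matrixP => p q; rewrite !mxE; ring.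
  apply: le_trans (sqnormD_young _ _ e0) _; rewrite lerD2r.
  apply: ler_wpM2l; first by rewrite addr_ge0 // ltW.
  by have := sqnorm_grad_step_le (phi_smooth i) L0 (h i x) (phi_cvx i) (hstar_min i) a0 aL.
apply: le_trans (ler_sum _ (fun i _ => dist_le i)) _.
rewrite big_split /= -!mulr_sumr sumrB -mulr_sumr; apply: lerD => //.
apply: ler_wpM2l; first by rewrite addr_ge0 // invr_ge0 ltW.
have err_le i := sqnorm_update_error_bound (g i) a (h_C2 i) (h_hess i) G0 e0 D0 v_le v_vreg
  (h_jac i).
rewrite -x1E in err_le.
apply: le_trans (ler_sum _ (fun i _ => err_le i)) _; rewrite -mulr_sumr.
apply: ler_wpM2l => //; apply: sum_error_terms_le res_le => //.
by rewrite /W !addr_ge0 ?sqr_ge0 // ltW.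
Qed.

End OneIteration.

Section Rates.
Variable R : realType.

Lemma pow_le_expR (eps beta : R) (t T : nat) : 0 <= eps -> T%:R * eps = beta -> (t <= T)%N ->
  (1 + eps) ^+ t <= expR beta.
Proof.
move=> e0 TE tT; apply: (@le_trans _ _ (expR (t%:R * eps))).
  rewrite expRM_natl lerXn2r ?nnegrE ?addr_ge0 ?expR_ge0 //; exact: expR_ge1Dx.
by rewrite ler_expR -TE ler_wpM2r // ler_nat.
Qed.

Lemma weighted_telescope (S D : nat -> R) (q b C : R) (T : nat) :
  1 <= q -> 0 <= C -> 0 <= S T ->
  (forall t, (t < T)%N -> S t.+1 <= q * (S t - q ^+ t * b * D t) + C) ->
  b * \sum_(t < T) D t <= S 0%N + T%:R * C.
Proof.
move=> q1 C0 ST step; have q0 : 0 < q := lt_le_trans ltr01 q1.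
(* the potential [S t / q ^ t] drops by at least [b * D t - C] at each step *)
suff tel t : (t <= T)%N -> b * \sum_(s < t) D s <= S 0%N - S t / q ^+ t + t%:R * C.
  by have := tel T (leqnn T); have := divr_ge0 ST (ltW (exprn_gt0 T q0)); lra.
elim: t => [|t IH] tT; first by rewrite big_ord0 expr0 divr1 subrr mulr0 mul0r addr0.
have qt0 := exprn_gt0 t q0.
have pot : S t.+1 / q ^+ t.+1 <= S t / q ^+ t - b * D t + C.
  apply: le_trans (_ : (q * (S t - q ^+ t * b * D t) + C) / q ^+ t.+1 <= _).
    by rewrite ler_pM2r ?invr_gt0 ?exprn_gt0 // step.
  have -> : (q * (S t - q ^+ t * b * D t) + C) / q ^+ t.+1
      = S t / q ^+ t - b * D t + C / q ^+ t.+1 by rewrite exprS; field; rewrite !gt_eqF.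
  by rewrite lerD2l ler_pdivrMr ?exprn_gt0 // ler_peMr // exprn_ege1.
have := IH (ltnW tT); rewrite big_ord_recr /= -natr1; lra.
Qed.

Lemma learning_rate_le (eps beta alpha L : R) (t T : nat) :
  0 < eps -> 0 < L -> 0 <= alpha -> T%:R = beta / eps -> (t <= T)%N ->
  (1 + eps) ^+ t * (alpha / (expR beta * L)) * L <= alpha.
Proof.
move=> e0 L0 a0 Teq tT.
have -> : (1 + eps) ^+ t * (alpha / (expR beta * L)) * L = (1 + eps) ^+ t / expR beta * alpha.
  by field; rewrite !gt_eqF ?expR_gt0.
rewrite -[leRHS]mul1r ler_wpM2r // ler_pdivrMr ?expR_gt0 // mul1r.
by apply: (pow_le_expR (ltW e0) _ tT); rewrite Teq mulfVK ?gt_eqF.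
Qed.

End Rates.

Lemma Fobj_sub_inf_le (R : realType) n c d (h : 'I_n -> 'cV[R]_d -> 'cV[R]_c)
    (phi : 'I_n -> 'cV[R]_c -> R) (hstar : 'I_n -> 'cV[R]_c) x :
  (forall i z, phi i (hstar i) <= phi i z) ->
  Fobj h phi x - inf (range (Fobj h phi))
    <= n%:R^-1 * \sum_(i < n) (phi i (h i x) - phi i (hstar i)).
Proof.
move=> hstar_min.
have inf_ge : n%:R^-1 * \sum_(i < n) phi i (hstar i) <= inf (range (Fobj h phi)).
  apply: lb_le_inf; first by exists (Fobj h phi 0), 0.
  move=> _ [y _ <-]; apply: ler_wpM2l; first by rewrite invr_ge0.
  by apply: ler_sum => i _; exact: hstar_min.
by rewrite sumrB mulrBr lerD2l lerN2.
Qed.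

Section FinalBound.
Variable R : realType.

Lemma final_constants_le (P K eps beta al Q : R) : 0 <= P -> 0 <= K -> 0 < eps -> 0 < beta ->
  0 < al -> al < 1 / 4 -> 0 < Q ->
  (eps / beta * P + 3 * eps * (1 + eps) * K) / (2 * (al / Q) * (1 - al)) <=
  Q * (1 + eps) / (2 * (1 - 4 * al) * al * beta) * P * eps
  + Q * (4 * eps + 3) / (2 * al * (1 - 4 * al)) * K * eps.
Proof.
move=> P0 K0 e0 b0 a0 a4 Q0.
have a1 : 0 < 1 - al by lra.
have a41 : 0 < 1 - 4 * al by lra.
have -> : (eps / beta * P + 3 * eps * (1 + eps) * K) / (2 * (al / Q) * (1 - al)) =
    Q / (2 * al) * (eps / beta * P * (1 - al)^-1 + eps * K * (3 * (1 + eps) / (1 - al))).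
  by field; rewrite !gt_eqF.
have -> : Q * (1 + eps) / (2 * (1 - 4 * al) * al * beta) * P * eps
    + Q * (4 * eps + 3) / (2 * al * (1 - 4 * al)) * K * eps =
    Q / (2 * al) * (eps / beta * P * ((1 + eps) / (1 - 4 * al))
                    + eps * K * ((4 * eps + 3) / (1 - 4 * al))).
  by field; rewrite !gt_eqF.
apply: ler_wpM2l; first by rewrite divr_ge0 ?mulr_ge0 ?ltW.
apply: lerD; apply: ler_wpM2l.
- by rewrite mulr_ge0 // divr_ge0 // ltW.
- by rewrite -[X in X <= _]mul1r ler_pdivrMr // mulrAC ler_pdivlMr //; nra.
- by rewrite mulr_ge0 // ltW.
- by rewrite ler_pdivrMr // mulrAC ler_pdivlMr //; nra.
Qed.

Lemma average_le (Sg S0 K eps beta al Q : R) (n T : nat) :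
  (0 < n)%N -> 0 <= S0 -> 0 <= K -> 0 < eps -> 0 < beta -> T%:R = beta / eps ->
  0 < al -> al < 1 / 4 -> 0 < Q ->
  2 * (al / Q) * (1 - al) * Sg <= S0 + T%:R * ((1 + eps^-1) * (3 * (n%:R * eps ^+ 2 * K))) ->
  T%:R^-1 * (n%:R^-1 * Sg) <=
    Q * (1 + eps) / (2 * (1 - 4 * al) * al * beta) * (n%:R^-1 * S0) * eps
    + Q * (4 * eps + 3) / (2 * al * (1 - 4 * al)) * K * eps.
Proof.
move=> n0 S00 K0 e0 b0 Teq a0 a4 Q0 sum_le.
have b_pos : 0 < 2 * (al / Q) * (1 - al).
  by apply: mulr_gt0; [rewrite mulr_gt0 ?divr_gt0 | lra].
have nT_pos : 0 < T%:R^-1 * n%:R^-1 :> R.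
  by apply: mulr_gt0; rewrite invr_gt0 ?Teq ?divr_gt0 ?ltr0n.
apply: le_trans (final_constants_le _ K0 e0 b0 a0 a4 Q0); last first.
  by rewrite mulr_ge0 ?invr_ge0.
rewrite ler_pdivlMr //.
have -> : T%:R^-1 * (n%:R^-1 * Sg) * (2 * (al / Q) * (1 - al)) =
    T%:R^-1 * n%:R^-1 * (2 * (al / Q) * (1 - al) * Sg) by ring.
apply: le_trans (ler_wpM2l (ltW nT_pos) sum_le) _; rewrite Teq.
by rewrite le_eqVlt; apply/predU1l; field; rewrite !gt_eqF ?ltr0n.
Qed.

End FinalBound.

Unset Implicit Arguments.

Theorem theorem2 (R : realType) (n c d : nat)
  (h : 'I_n -> 'cV[R]_d -> 'cV[R]_c) (phi : 'I_n -> 'cV[R]_c -> R)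
  (hstar : 'I_n -> 'cV[R]_c)
  (Lphi G V Hc eps beta Dc alpha : R) (T : nat)
  (w v vreg : nat -> 'cV[R]_d) :
  (0 < n)%N -> (0 < c)%N -> (0 < d)%N ->
  0 < Lphi -> 0 < G -> 0 < V -> 0 < Hc ->
  0 < eps -> 0 < beta -> T%:R = beta / eps ->
  0 < Dc -> 0 < alpha -> alpha < 1 / 4 ->
  (forall i z, phi i (hstar i) <= phi i z) ->
  (* Assumption A *)
  (forall i, convex_fn (phi i) /\ bounded_below (phi i) /\ L_smooth Lphi (phi i)) ->
  (* Assumption B *)
  (forall i (j : 'I_c), twice_cont_diff (fun x => h i x j 0)) ->
  (forall i (j : 'I_c) x, opnorm (hessian_mx (fun y => h i y j 0) x) <= G) ->
  (* Algorithm 2, with eta^(t) = Dc sqrt eps, alpha_i^(t) = (1+eps)^t alpha/(e^beta Lphi) *)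
  (forall t, (t < T)%N -> forall u,
     PsiT h phi eps (Dc * Num.sqrt eps)
       (fun _ => (1 + eps) ^+ t * (alpha / (expR beta * Lphi))) (w t) (vreg t)
     <= PsiT h phi eps (Dc * Num.sqrt eps)
       (fun _ => (1 + eps) ^+ t * (alpha / (expR beta * Lphi))) (w t) u) ->
  (forall t, (t < T)%N -> enorm (v t - vreg t) <= eps) ->
  (forall t, (t < T)%N -> w t.+1 = w t - (Dc * Num.sqrt eps) *: v t) ->
  (* Assumption C *)
  (forall t, (t < T)%N -> exists vh : 'cV[R]_d, sqnorm vh <= V /\
     PhiT h phi (Dc * Num.sqrt eps)
       (fun _ => (1 + eps) ^+ t * (alpha / (expR beta * Lphi))) (w t) vh <= eps ^+ 2) ->
  (* Assumption D *)
  (forall i t, (t < T)%N -> opnorm (jacobian_mx (h i) (w t)) <= Hc / Num.sqrt eps) ->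
  (T%:R)^-1 * \sum_(t < T) (Fobj h phi (w t) - inf (range (Fobj h phi)))
  <= expR beta * Lphi * (1 + eps) / (2 * (1 - 4 * alpha) * alpha * beta)
       * ((n%:R)^-1 * \sum_(i < n) sqnorm (h i (w 0%N) - hstar i)) * eps
   + expR beta * Lphi * (4 * eps + 3) / (2 * alpha * (1 - 4 * alpha))
       * (Dc ^+ 2 * Hc ^+ 2 + c%:R * (2 + (V + eps ^+ 2 + 2) * G * Dc ^+ 2) ^+ 2 + 2 + V)
       * eps.
Proof.
move=> n0 _ _ L0 G0 V0 _ e0 b0 Teq D0 a0 a4 hstar_min phi_hyps h_C2 h_hess vreg_min v_vreg
  w_step assumC h_jac.
have Q0 : 0 < expR beta * Lphi by rewrite mulr_gt0 ?expR_gt0.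
set A0 := alpha / (expR beta * Lphi).
set K := Dc ^+ 2 * Hc ^+ 2 + _ + 2 + V.
pose sq t := \sum_(i < n) sqnorm (h i (w t) - hstar i).
pose gap t := \sum_(i < n) (phi i (h i (w t)) - phi i (hstar i)).
have step t : (t < T)%N ->
    sq t.+1 <= (1 + eps) * (sq t - (1 + eps) ^+ t * (2 * A0 * (1 - alpha)) * gap t)
               + (1 + eps^-1) * (3 * (n%:R * eps ^+ 2 * K)).
  move=> tT; have [vh [vhV vh_res]] := assumC t tT.
  have -> : (1 + eps) ^+ t * (2 * A0 * (1 - alpha)) = 2 * ((1 + eps) ^+ t * A0) * (1 - alpha).
    by ring.
  apply: (sum_sqdist_step_le n0 L0 (ltW G0) (ltW V0) e0 D0 _
    (learning_rate_le e0 L0 (ltW a0) Teq (ltnW tT)) hstar_min (fun i => (phi_hyps i).1)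
    (fun i => (phi_hyps i).2.2) h_C2 h_hess (vreg_min t tT) (v_vreg t tT) (w_step t tT)
    vhV vh_res (fun i => h_jac i t tT)).
  by rewrite mulr_gt0 ?exprn_gt0 ?addr_gt0 // divr_gt0.
apply: (@le_trans _ _ (T%:R^-1 * (n%:R^-1 * \sum_(t < T) gap t))).
  apply: ler_wpM2l; first by rewrite invr_ge0.
  by rewrite mulr_sumr; apply: ler_sum => t _; exact: Fobj_sub_inf_le.
have K0 : 0 <= K.
  have := mulr_ge0 (ler0n R c) (sqr_ge0 (2 + (V + eps ^+ 2 + 2) * G * Dc ^+ 2)).
  by have := mulr_ge0 (sqr_ge0 Dc) (sqr_ge0 Hc); rewrite /K; lra.
have sq_ge0 t : 0 <= sq t by apply: sumr_ge0 => i _; exact: sqnorm_ge0.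
apply: average_le => //; first exact: sq_ge0.
rewrite -/(sq 0%N) -/A0; apply: weighted_telescope step => //.
- by rewrite lerDl ltW.
- apply: mulr_ge0; first by rewrite addr_ge0 // invr_ge0 ltW.
  by rewrite mulr_ge0 // mulr_ge0 // mulr_ge0 ?sqr_ge0.
Qed.
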